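(* Let $3 \le k \le n$ and break the segment $[0,1]$ at $n-1$ independent uniformly random points into $n$ pieces. For every integer $m$ with $0 \le m \le \binom{n}{k}$, the probability that exactly $m$ of the $k$-element subsets of the $n$ pieces can form a $k$-gon is nonzero. Equivalently, $P(k,n,0) > 0$ and $P(k,n,m-1) - P(k,n,m) > 0$ for all $0 < m \le \binom nk$, where $P(k,n,m)$ is the probability that at least $m$ of the $k$-element subsets of pieces can form a $k$-gon.
   Context: A collection of $k$ lengths can form a (nondegenerate) $k$-gon iff each length is less than the sum of the other $k-1$. *)

From HB Require Import structures.
From mathcomp Require Import all_boot all_order all_algebra.
From mathcomp Require Import all_classical all_reals all_analysis.
Set Implicit Arguments. Unset Strict Implicit. Unset Printing Implicit Defensive.
Import Order.TTheory GRing.Theory Num.Theory.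
Local Open Scope ring_scope.

Section Defs.
Variable R : realType.

(* Iterated integral over [0,1]^j of a function of j real variables
   (given as a sequence): this is the expectation of f(U_1,...,U_j) for
   independent uniform U_i on [0,1] (product Lebesgue measure, by Tonelli). *)
Fixpoint cube_int (j : nat) (f : seq R -> \bar R) : \bar R :=
  match j with
  | 0 => f [::]
  | j'.+1 => (\int[@lebesgue_measure R]_(x in `[0%R, 1%R]) cube_int j' (fun s => f (x :: s)))%E
  end.

Definition cut_points (xs : seq R) : seq R := sort <=%R (0 :: 1 :: xs).

Definition piece (n : nat) (xs : seq R) (i : 'I_n) : R :=
  (cut_points xs)`_(i.+1) - (cut_points xs)`_i.

Definition forms_polygon (n : nat) (xs : seq R) (S : {set 'I_n}) : bool :=
  [forall i in S, piece xs i < \sum_(j in S | j != i) piece xs j].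

Definition num_polygons (n k : nat) (xs : seq R) : nat :=
  #|[set S : {set 'I_n} | (#|S| == k) && forms_polygon xs S]|.

Definition prob_exactly (n k m : nat) : \bar R :=
  cube_int n.-1 (fun xs => (if num_polygons n k xs == m then 1 else 0)%:E).

End Defs.

(* By a perturbation argument it suffices to find positive integer
   lengths a_0, ..., a_(n-1) with exactly m polygonal k-subsets and no k-subset in
   which one length equals the sum of the others: every breaking whose cut points
   lie close enough to the normalised partial sums of a has the same count, and
   these breakings form a box of positive volume.

   Choose j with C(j,k) <= m <= C(j+1,k).  Give piece i < j the weight
   b_i = 2^n + 2^i, piece j the weight b_j = (k-1) 2^n + th, and the pieces
   beyond j weights so large that they never fit in a polygon.  A k-subset then
   satisfies the weak polygon inequalities iff it lies in {0..j} and, when it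
   contains j, the binary number encoded by its other elements is at least th.
   As th grows from 0 to n 2^n + 1 this count falls from C(j+1,k) to C(j,k), by
   at most one per step because distinct subsets encode distinct numbers; so
   some th gives exactly m.  Finally a_i := 1 + k b_i makes the inequalities
   strict and rules out ties, the two sides being 1 and k-1 modulo k >= 3. *)

From HB Require Import structures.
From mathcomp Require Import all_boot all_order all_algebra.
From mathcomp Require Import all_classical all_reals all_analysis.
From mathcomp Require Import zify ring lra.
Import Order.TTheory GRing.Theory Num.Theory.
Set Implicit Arguments. Unset Strict Implicit.

Lemma exists_bracket (f : nat -> nat) n m :
  0 < n -> f 0 <= m <= f n -> exists2 j, j < n & f j <= m <= f j.+1.
Proof.
elim: n => // n IH _ /andP[f0m mfn].
have [fnm|mfn'] := leqP (f n) m; first by exists n; rewrite ?fnm.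
case: n IH mfn' {mfn} => [|n] IH mfn'; first by move: f0m; rewrite leqNgt mfn'.
have fm : f 0 <= m <= f n.+1 by rewrite f0m ltnW.
have [j jn fj] := IH isT fm.
by exists j => //; exact: ltnW.
Qed.

Lemma discrete_ivt (g : nat -> nat) M c :
  (forall t, t < M -> g t <= (g t.+1).+1) -> g M <= c -> c <= g 0 ->
  exists2 t, t <= M & g t = c.
Proof.
elim: M => [|M IH] step gM cg0.
  by exists 0 => //; apply/eqP; rewrite eqn_leq gM.
have [gMc|cgM] := leqP (g M) c.
  have [t tM gt] := IH (fun t tM => step t (ltnW tM)) gMc cg0.
  by exists t => //; exact: leqW.
by exists M.+1 => //; have := step M (ltnSn M); lia.
Qed.

Lemma card_ord_lt n m : m <= n -> #|[set i : 'I_n | i < m]| = m.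
Proof.
move=> mn; have -> : [set i : 'I_n | i < m] = widen_ord mn @: [set: 'I_m].
  apply/setP => i; rewrite inE; apply/idP/imsetP => [im | [i' _ ->]]; last by case: i'.
  by exists (Ordinal im) => //; apply: val_inj.
by rewrite card_imset ?cardsT ?card_ord // => i1 i2 [] /val_inj.
Qed.

Lemma binary_digits_inj n (f g : 'I_n -> bool) :
  \sum_(i < n) f i * 2 ^ i = \sum_(i < n) g i * 2 ^ i -> f =1 g.
Proof.
elim: n f g => [|n IH] f g E i; first by case: i.
have shift (h : 'I_n.+1 -> bool) : \sum_(i < n) h (lift ord0 i) * 2 ^ (lift ord0 i)
    = 2 * \sum_(i < n) h (lift ord0 i) * 2 ^ i.
  by rewrite big_distrr; apply: eq_bigr => l _; rewrite /= expnS mulnCA.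
move: E; rewrite !big_ord_recl !shift /= expn0 !muln1 => E.
have E0 : f ord0 = g ord0.
  move: (E); case: (f ord0); case: (g ord0) => //= /(congr1 odd);
  by rewrite !oddD /= !addbF !addbb.
move: E; rewrite E0 => /addnI /eqP; rewrite eqn_mul2l /= => /eqP /IH E1.
by case: (unliftP ord0 i) => [i' ->|->].
Qed.

Definition pow2sum n (T : {set 'I_n}) := \sum_(i in T) 2 ^ i.

Lemma pow2sum_inj n : injective (@pow2sum n).
Proof.
have digits (T : {set 'I_n}) : pow2sum T = \sum_(i < n) (i \in T) * 2 ^ i.
  by rewrite /pow2sum big_mkcond; apply: eq_bigr => i _; case: (i \in T); rewrite ?mul1n.
by move=> T1 T2; rewrite !digits => /binary_digits_inj E; apply/setP => i; exact: E.
Qed.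

Definition weak_polygon {n} (b : nat -> nat) (S : {set 'I_n}) :=
  [forall i in S, b i <= \sum_(l in S :\ i) b l].

Definition nat_polygon {n} (a : nat -> nat) (S : {set 'I_n}) :=
  [forall i in S, a i < \sum_(l in S :\ i) a l].

Definition num_weak_polygons n k (b : nat -> nat) :=
  #|[set S : {set 'I_n} | (#|S| == k) && weak_polygon b S]|.

Section Weights.
Variables (n k : nat) (j : 'I_n).
Hypothesis k_gt2 : 2 < k.

Definition base := 2 ^ n.
Definition cap := n * 2 ^ n + 1.
Definition huge := k * base + cap.

Definition weight (th l : nat) : nat :=
  if l < j then base + 2 ^ l
  else if l == j then (k - 1) * base + th
  else huge * n.+1 ^ l.

Definition upto_j := [set i : 'I_n | i < j.+1].

Lemma pow2_le_base l : l <= n -> 2 ^ l <= base.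
Proof. by move=> ln; rewrite leq_exp2l. Qed.

Lemma weight_ge_base th l : base <= weight th l.
Proof.
have base_le_huge : base <= huge by rewrite /huge; nia.
rewrite /weight; case: ifP => _; first exact: leq_addr.
case: ifP => _; first nia.
by apply: leq_trans base_le_huge _; rewrite leq_pmulr // expn_gt0.
Qed.

Lemma pow2sum_lt_cap (T : {set 'I_n}) : pow2sum T < cap.
Proof.
rewrite /pow2sum /cap addn1 ltnS big_mkcond /=.
apply: leq_trans (_ : \sum_(i < n) 2 ^ n <= _); last by rewrite sum_nat_const card_ord.
by apply: leq_sum => i _; case: (i \in T); rewrite // pow2_le_base // ltnW.
Qed.

Lemma weight_le_huge th l p : th <= cap -> l <= p -> weight th l <= huge * n.+1 ^ p.
Proof.
move=> th_cap lp; have huge_le : huge <= huge * n.+1 ^ p by rewrite leq_pmulr // expn_gt0.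
rewrite /weight; case: ltnP => [lj | jl].
  have := pow2_le_base (ltnW (leq_trans lj (ltnW (ltn_ord j)))).
  by rewrite /huge in huge_le *; nia.
case: eqP => _; first by rewrite /huge in huge_le *; nia.
by rewrite leq_mul2l leq_pexp2l // orbT.
Qed.

Lemma sum_lt_weight_top th (S : {set 'I_n}) (i : 'I_n) : th <= cap -> j < i ->
  (forall l, l \in S -> l <= i) -> \sum_(l in S :\ i) weight th l < weight th i.
Proof.
move=> th_cap ji Smax.
have wi : weight th i = huge * n.+1 ^ i by rewrite /weight ltnNge (ltnW ji) /= gtn_eqF.
have [p ip] : exists p, val i = p.+1.
  by exists i.-1; rewrite prednK // (leq_ltn_trans (leq0n j) ji).
have others l : l \in S :\ i -> weight th l <= huge * n.+1 ^ p.
  rewrite in_setD1 => /andP[li lS]; apply: weight_le_huge => //.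
  have := Smax l lS; rewrite leq_eqVlt ip ltnS => /orP[/eqP e | //].
  by move: li; rewrite -val_eqE /= e ip eqxx.
have : \sum_(l in S :\ i) weight th l <= \sum_(l in S :\ i) huge * n.+1 ^ p.
  exact: leq_sum.
rewrite sum_nat_const wi ip expnS.
have cardS : #|S :\ i| <= n by rewrite -[n in _ <= n]card_ord max_card.
have : 0 < huge * n.+1 ^ p by rewrite muln_gt0 expn_gt0 /huge /cap addn1 addnS.
nia.
Qed.

Lemma weak_polygon_sub_upto th (S : {set 'I_n}) :
  th <= cap -> weak_polygon (weight th) S -> S \subset upto_j.
Proof.
move=> th_cap polyS; apply/fintype.subsetP => i1 i1S; rewrite inE ltnNge; apply/negP => ji1.
case: (@arg_maxnP _ i1 (mem S) val i1S) => i iS imax.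
move/forallP/(_ i)/implyP/(_ iS): polyS; rewrite leqNgt => /negP; apply.
by apply: sum_lt_weight_top => //; exact: leq_trans ji1 (imax _ i1S).
Qed.

Lemma weight_small_le_sum th (S : {set 'I_n}) (i : 'I_n) : #|S| = k -> i \in S -> i < j ->
  weight th i <= \sum_(l in S :\ i) weight th l.
Proof.
move=> Sk iS ij.
have : #|S :\ i| * base <= \sum_(l in S :\ i) weight th l.
  by rewrite -sum_nat_const; apply: leq_sum => l _; exact: weight_ge_base.
have two_others : 2 <= #|S :\ i|.
  by move: (cardsD1 i S); rewrite iS Sk; move: #|S :\ i| => c; lia.
have := leq_mul two_others (leqnn base); have := pow2_le_base (ltnW (ltn_ord i)).
rewrite /weight ij; move: #|S :\ i| (\sum_(l in S :\ i) weight th l) => c s; lia.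
Qed.

Lemma sum_weight_upto th (S : {set 'I_n}) : S \subset upto_j ->
  \sum_(l in S :\ j) weight th l = #|S :\ j| * base + pow2sum (S :\ j).
Proof.
move=> sub; rewrite /pow2sum -sum_nat_const -big_split /=; apply: eq_bigr => l.
rewrite in_setD1 => /andP[lj lS]; have := fintype.subsetP sub l lS.
by rewrite inE ltnS leq_eqVlt val_eqE (negbTE lj) /= /weight => ->.
Qed.

Lemma weak_polygon_weightE th (S : {set 'I_n}) : th <= cap -> #|S| = k ->
  weak_polygon (weight th) S =
    (S \subset upto_j) && ((j \in S) ==> (th <= pow2sum (S :\ j))).
Proof.
move=> th_cap Sk.
have top_j : S \subset upto_j -> j \in S ->
    (weight th j <= \sum_(l in S :\ j) weight th l) = (th <= pow2sum (S :\ j)).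
  move=> sub jS; rewrite sum_weight_upto // /weight ltnn eqxx.
  have -> : #|S :\ j| = k - 1.
    by move: (cardsD1 j S); rewrite jS Sk; move: #|S :\ j| => c; lia.
  by rewrite leq_add2l.
apply/idP/idP => [polyS | /andP[sub jth]].
  have sub := weak_polygon_sub_upto th_cap polyS.
  rewrite sub; apply/implyP => jS; rewrite -top_j //.
  by move/forallP/(_ j): polyS; rewrite jS.
apply/forallP => i; apply/implyP => iS.
have := fintype.subsetP sub i iS.
rewrite inE ltnS leq_eqVlt => /orP[/eqP/val_inj eij | ij].
  by rewrite eij in iS *; rewrite top_j // (implyP jth).
exact: weight_small_le_sum.
Qed.

Lemma num_weak_polygons_weightE th : th <= cap ->
  num_weak_polygons n k (weight th) = #|[set S : {set 'I_n} |
    [&& S \subset upto_j, #|S| == k & (j \in S) ==> (th <= pow2sum (S :\ j))]]|.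
Proof.
move=> th_cap; apply: eq_card => S; rewrite !inE.
by case: eqP => [Sk | _]; rewrite ?andbF // weak_polygon_weightE // andbA andbC.
Qed.

Lemma num_weak_polygons_weight0 : num_weak_polygons n k (weight 0) = 'C(j.+1, k).
Proof.
rewrite num_weak_polygons_weightE // -[j.+1](card_ord_lt (ltn_ord j)) -cards_draws.
by apply: eq_card => S; rewrite !inE implybT andbT.
Qed.

Lemma num_weak_polygons_weight_cap : num_weak_polygons n k (weight cap) = 'C(j, k).
Proof.
rewrite num_weak_polygons_weightE // -[j in 'C(j, _)](card_ord_lt (ltnW (ltn_ord j))).
rewrite -cards_draws; apply: eq_card => S; rewrite !inE.
rewrite leqNgt pow2sum_lt_cap implybF andbCA [RHS]andbC; congr andb.
apply/andP/fintype.subsetP => [[/fintype.subsetP sub jS] i iS | sub].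
  have := sub i iS; rewrite !inE ltnS leq_eqVlt => /orP[/eqP/val_inj eij | //].
  by move: jS; rewrite -eij iS.
split; first by apply/fintype.subsetP => i /sub; rewrite !inE => /ltnW.
by apply/negP => /sub; rewrite inE ltnn.
Qed.

Lemma num_weak_polygons_weight_step th : th < cap ->
  num_weak_polygons n k (weight th) <= (num_weak_polygons n k (weight th.+1)).+1.
Proof.
move=> th_cap; rewrite !num_weak_polygons_weightE ?(ltnW th_cap) //.
set X1 := [set S | _]; set X2 := [set S | _].
pose Y := [set S : {set 'I_n} | (j \in S) && (pow2sum (S :\ j) == th)].
have sub : X1 \subset X2 :|: Y.
  apply/fintype.subsetP => S; rewrite !inE => /and3P[-> -> jth] /=.
  case: (j \in S) jth => //=.
  by rewrite leq_eqVlt => /orP[/eqP -> | ->]; rewrite ?eqxx ?orbT.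
have cardY : #|Y| <= 1.
  apply/card_le1_eqP => S1 S2; rewrite !inE => /andP[jS1 /eqP e1] /andP[jS2 /eqP e2].
  rewrite -(finset.setD1K jS1) -(finset.setD1K jS2); congr (_ |: _).
  by apply: pow2sum_inj; rewrite e1 e2.
apply: leq_trans (subset_leq_card sub) _; rewrite cardsU; lia.
Qed.

End Weights.

Lemma affine_ltE k b s : 2 < k -> (1 + k * b < (k - 1) + k * s) = (b <= s).
Proof.
move=> k_gt2; case: (leqP b s) => bs; have := leq_mul (leqnn k) bs; rewrite ?mulnS;
  move: (k * b) (k * s) => x y; lia.
Qed.

Lemma affine_neq k b s : 2 < k -> 1 + k * b != (k - 1) + k * s.
Proof.
move=> k_gt2; case: (leqP b s) => bs; have := leq_mul (leqnn k) bs; rewrite ?mulnS;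
  move: (k * b) (k * s) => x y; lia.
Qed.

Lemma sum_affine n k (b : nat -> nat) (S : {set 'I_n}) i : #|S| = k -> i \in S ->
  \sum_(l in S :\ i) (1 + k * b l) = (k - 1) + k * \sum_(l in S :\ i) b l.
Proof.
move=> Sk iS; rewrite big_split /= sum_nat_const big_distrr /= muln1.
by move: (cardsD1 i S); rewrite iS Sk => ->; rewrite addKn.
Qed.

Lemma nat_polygon_affine n k (b : nat -> nat) (S : {set 'I_n}) : 2 < k -> #|S| = k ->
  nat_polygon (fun l => 1 + k * b l) S = weak_polygon b S.
Proof.
move=> k_gt2 Sk; apply: eq_forallb => i; case: (boolP (i \in S)) => //= iS.
by rewrite sum_affine // affine_ltE.
Qed.

Theorem exists_weights_num_polygons n k m : 2 < k -> k <= n -> m <= 'C(n, k) ->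
  exists a : nat -> nat, [/\ forall l, 0 < a l,
    forall (S : {set 'I_n}) i, #|S| = k -> i \in S -> a i != \sum_(l in S :\ i) a l &
    #|[set S : {set 'I_n} | (#|S| == k) && nat_polygon a S]| = m].
Proof.
move=> k_gt2 kn mC.
have [j jn /andP[Cjm mCj]] : exists2 j, j < n & 'C(j, k) <= m <= 'C(j.+1, k).
  by apply: exists_bracket; [lia | rewrite bin0n gtn_eqF ?mC //; lia].
pose jo := Ordinal jn.
have [th th_cap num_th] :
    exists2 th, th <= cap n & num_weak_polygons n k (weight k jo th) = m.
  apply: discrete_ivt => [t||]; first exact: num_weak_polygons_weight_step.
  - by rewrite num_weak_polygons_weight_cap.
  - by rewrite num_weak_polygons_weight0.
exists (fun l => 1 + k * weight k jo th l); split => // [S i Sk iS|].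
  by rewrite sum_affine // affine_neq.
rewrite -num_th; apply: eq_card => S; rewrite !inE.
by case: eqP => //= Sk; exact: nat_polygon_affine.
Qed.

Local Open Scope ring_scope.

Section IntegralMonotone.
Context d (T : measurableType d) (R : realType) (mu : {measure set T -> \bar R}).
Local Open Scope ereal_scope.

(* The integrands of [cube_int] need not be measurable; monotonicity still holds
   because the integral of a nonnegative function is a supremum over the simple
   functions below it. *)
Lemma ge0_le_integral_nonmeas (D : set T) (f1 f2 : T -> \bar R) :
  (forall x, D x -> 0 <= f1 x) -> (forall x, D x -> f1 x <= f2 x) ->
  \int[mu]_(x in D) f1 x <= \int[mu]_(x in D) f2 x.
Proof.
move=> f10 f12.
have f20 x : D x -> 0 <= f2 x by move=> Dx; exact: le_trans (f10 _ Dx) (f12 _ Dx).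
rewrite !ge0_integralE //; apply: ereal_sup_le => _ [h hf1 <-]; exists h => // x.
apply: le_trans (hf1 x) _; rewrite /patch; case: ifP => // /set_mem; exact: f12.
Qed.

End IntegralMonotone.

Lemma integral01_ge_box (R : realType) (g : R -> \bar R) (l h c : R) :
  0 <= l -> l < h -> h <= 1 -> 0 <= c -> (forall x, (0 <= g x)%E) ->
  (forall x, l <= x <= h -> (c%:E <= g x)%E) ->
  ((c * (h - l))%:E <= \int[lebesgue_measure]_(x in `[0%R, 1%R]) g x)%E.
Proof.
move=> l0 lh h1 c0 g0 gc.
have box01 : (`[l, h] `<=` `[0%R, 1%R])%classic.
  move=> x /=; rewrite !in_itv /= => /andP[lx xh].
  by rewrite (le_trans l0 lx) (le_trans xh h1).
apply: (@le_trans _ _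
  (\int[lebesgue_measure]_(x in `[0%R, 1%R]) ((cst c%:E) \_ `[l, h]%classic) x)%E).
  rewrite -integral_mkcondr setIidr // integral_cst; last exact: measurable_itv.
  rewrite EFinM; have := lebesgue_measure_itv `[l, h].
  by rewrite /= lte_fin lh -EFinB => <-.
apply: ge0_le_integral_nonmeas => x _; rewrite /patch; case: ifP => // /set_mem.
- by rewrite /= in_itv /= => /gc.
Qed.

Lemma cube_int_ge0 (R : realType) j (f : seq R -> \bar R) :
  (forall s, (0 <= f s)%E) -> (0 <= cube_int j f)%E.
Proof.
elim: j f => [|j IH] f f0 /=; first exact: f0.
by apply: integral_ge0 => x _; exact: IH.
Qed.

Lemma cube_int_ge_box (R : realType) j (f : seq R -> \bar R) (lo hi : nat -> R) :
  (forall t, (t < j)%N -> [/\ 0 <= lo t, lo t < hi t & hi t <= 1]) ->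
  (forall s, (0 <= f s)%E) ->
  (forall s, size s = j -> (forall t, (t < j)%N -> lo t <= s`_t <= hi t) -> (1 <= f s)%E) ->
  ((\prod_(t < j) (hi t - lo t))%:E <= cube_int j f)%E.
Proof.
elim: j f lo hi => [|j IH] f lo hi box f0 f1 /=.
  by rewrite big_ord0; apply: f1 => // t.
have [lo0 lohi hi1] := box 0%N isT.
rewrite big_ord_recl mulrC; apply: integral01_ge_box => //.
- apply: prodr_ge0 => t _; rewrite subr_ge0.
  by have [_ /ltW + _] := box _ (ltn_ord (lift ord0 t)).
- by move=> x; apply: cube_int_ge0 => s; exact: f0.
move=> x xbox; apply: (IH _ (fun t => lo t.+1) (fun t => hi t.+1)) => [t tj|s|s ss sbox].
- exact: box.
- exact: f0.
- by apply: f1 => [|[|t] //= /sbox]; rewrite /= ?ss.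
Qed.

Lemma cube_int_gt0 (R : realType) j (f : seq R -> \bar R) (lo hi : nat -> R) :
  (forall t, (t < j)%N -> [/\ 0 <= lo t, lo t < hi t & hi t <= 1]) ->
  (forall s, (0 <= f s)%E) ->
  (forall s, size s = j -> (forall t, (t < j)%N -> lo t <= s`_t <= hi t) -> (1 <= f s)%E) ->
  (0 < cube_int j f)%E.
Proof.
move=> box f0 f1; apply: lt_le_trans (cube_int_ge_box box f0 f1).
rewrite lte_fin; apply: prodr_gt0 => t _; rewrite subr_gt0.
by have [_ + _] := box _ (ltn_ord t).
Qed.

Lemma lt_sum_approx (R : realType) n (q : 'I_n -> R) (a : 'I_n -> nat) (P : pred 'I_n)
    (i : 'I_n) (T eps : R) :
  0 < T -> n.+1%:R * eps < 1 -> (forall l, `|T * q l - (a l)%:R| <= eps) ->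
  (a i != \sum_(l | P l) a l)%N ->
  (q i < \sum_(l | P l) q l) = (a i < \sum_(l | P l) a l)%N.
Proof.
move=> T_gt0 eps_small approx no_tie.
set A := (\sum_(l | P l) a l)%N.
have sumE : T * \sum_(l | P l) q l = A%:R + \sum_(l | P l) (T * q l - (a l)%:R).
  by rewrite mulr_sumr natr_sum -big_split /=; apply: eq_bigr => l _; rewrite addrC subrK.
have sum_err : `|\sum_(l | P l) (T * q l - (a l)%:R)| <= n%:R * eps.
  apply: le_trans (ler_norm_sum _ _ _) _; rewrite big_mkcond /=.
  apply: le_trans (_ : \sum_(l < n) eps <= _); last by rewrite sumr_const card_ord mulr_natl.
  apply: ler_sum => l _; case: ifP => _; first exact: approx.
  exact: le_trans (normr_ge0 _) (approx i).
have eps_split : n.+1%:R * eps = n%:R * eps + eps by rewrite -addn1 natrD mulrDl mul1r.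
rewrite -(ltr_pM2l T_gt0) sumE.
move: sum_err (approx i); rewrite !ler_norml.
move: (\sum_(l | P l) _) (T * q i) => y x /andP[y1 y2] /andP[x1 x2].
case: (ltngtP (a i) A) => [lt | gt | eq].
- have : (a i)%:R + 1 <= A%:R :> R by rewrite natr1 ler_nat.
  by move=> ?; apply/idP; lra.
- have : A%:R + 1 <= (a i)%:R :> R by rewrite natr1 ler_nat.
  by move=> ?; apply/negbTE; rewrite -leNgt; lra.
- by rewrite eq eqxx in no_tie.
Qed.

Lemma big_setD1_cond (T : finType) (V : Type) (idx : V) (op : V -> V -> V)
    (S : {set T}) (i : T) (F : T -> V) :
  \big[op/idx]_(l in S | l != i) F l = \big[op/idx]_(l in S :\ i) F l.
Proof. by apply: eq_bigl => l; rewrite in_setD1 andbC. Qed.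

Section Sampling.
Variables (R : realType) (n : nat) (a : nat -> nat).
Hypotheses (a_gt0 : forall l, (0 < a l)%N) (n_gt0 : (0 < n)%N).

Definition cum t := (\sum_(l < t) a l)%N.
Definition total : R := (cum n)%:R.
Definition node t : R := (cum t)%:R / total.
Definition tol : R := (2 * n.+1)%:R^-1.
Definition rad : R := tol / (2 * total).
Definition box_lo t := node t.+1 - rad.
Definition box_hi t := node t.+1 + rad.

Lemma cumS t : cum t.+1 = (cum t + a t)%N.
Proof. by rewrite /cum big_ord_recr. Qed.

Lemma leq_cum u v : (u <= v)%N -> (cum u <= cum v)%N.
Proof.
elim: v => [|v IH]; first by rewrite leqn0 => /eqP ->.
rewrite leq_eqVlt ltnS => /orP[/eqP -> // | /IH uv].
by rewrite cumS (leq_trans uv) // leq_addr.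
Qed.

Lemma total_gt0 : 0 < total.
Proof.
by rewrite /total ltr0n; case: n n_gt0 => // n' _; rewrite cumS addn_gt0 a_gt0 orbT.
Qed.

Lemma node0 : node 0 = 0.
Proof. by rewrite /node /cum big_ord0 mul0r. Qed.

Lemma node_last : node n = 1.
Proof. by rewrite /node divff // gt_eqF // total_gt0. Qed.

Lemma node_gap t : node t + total^-1 <= node t.+1.
Proof.
rewrite /node cumS natrD mulrDl lerD2l ler_pdivlMr ?total_gt0 //.
by rewrite mulVf ?gt_eqF ?total_gt0 // ler1n.
Qed.

Lemma node_ge0 t : 0 <= node t.
Proof. by rewrite /node divr_ge0 // ltW // total_gt0. Qed.

Lemma node_gap_le1 t : (t < n)%N -> node t + total^-1 <= 1.
Proof.
move=> tn; apply: le_trans (node_gap t) _; rewrite -node_last /node.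
apply: ler_wpM2r; first by rewrite invr_ge0 ltW // total_gt0.
by rewrite ler_nat leq_cum.
Qed.

Lemma tol_small : n.+1%:R * tol < 1.
Proof.
have -> : n.+1%:R * tol = 2^-1 by rewrite /tol natrM; field.
lra.
Qed.

Lemma rad_gt0 : 0 < rad.
Proof. by rewrite /rad /tol divr_gt0 ?invr_gt0 ?ltr0n ?mulr_gt0 ?total_gt0. Qed.

Lemma rad_le_gap : 4 * rad <= total^-1.
Proof.
have T0 := total_gt0.
have -> : 4 * rad = n.+1%:R^-1 / total.
  rewrite /rad /tol natrM; field.
  by rewrite (gt_eqF T0) addrC natr1 pnatr_eq0.
rewrite -[X in _ <= X]mul1r; apply: ler_wpM2r; first by rewrite invr_ge0 ltW.
by rewrite invf_le1 ?ltr0n // ler1n.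
Qed.

Lemma total_rad : total * (2 * rad) = tol.
Proof.
have T0 := total_gt0; rewrite /rad /tol natrM; field.
by rewrite (gt_eqF T0) addrC natr1 pnatr_eq0.
Qed.

Lemma box_bounds t :
  (t < n.-1)%N -> [/\ 0 <= box_lo t, box_lo t < box_hi t & box_hi t <= 1].
Proof.
move=> tn; have tn' : (t.+1 < n)%N by rewrite -ltn_predRL.
have := rad_gt0; have := rad_le_gap; have := node_gap_le1 tn'; have := node_gap t.
have := node_ge0 t; have : 0 < total^-1 by rewrite invr_gt0 total_gt0.
rewrite /box_lo /box_hi; split; lra.
Qed.

Definition cut_seq (s : seq R) := 0 :: rcons s 1.

Section InBox.
Variable s : seq R.
Hypotheses (size_s : size s = n.-1)
  (s_box : forall t, (t < n.-1)%N -> box_lo t <= s`_t <= box_hi t).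

Lemma cut_seq_near_node t : (t <= n)%N -> `|(cut_seq s)`_t - node t| <= rad.
Proof.
have rad0 := rad_gt0; case: t => [|t] tn /=.
  by rewrite node0 subr0 normr0 ltW.
rewrite nth_rcons size_s; case: ltnP => [ts | st].
  have := s_box ts; rewrite /box_lo /box_hi ler_norml => /andP[? ?].
  by apply/andP; split; lra.
have -> : t = n.-1 by apply/eqP; rewrite eqn_leq st andbT -ltnS prednK.
by rewrite eqxx prednK // node_last subrr normr0 ltW.
Qed.

Lemma cut_seq_sorted : sorted <=%R (cut_seq s).
Proof.
apply/(sortedP 0) => t; rewrite /cut_seq /= size_rcons size_s prednK // ltnS => tn.
have := cut_seq_near_node (ltnW tn); have := cut_seq_near_node tn.
have := node_gap t; have := rad_le_gap; have := rad_gt0.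
by rewrite !ler_norml => ? ? ? /andP[? ?] /andP[? ?]; lra.
Qed.

Lemma cut_pointsE : cut_points s = cut_seq s.
Proof.
apply: (sorted_eq le_trans le_anti).
- by apply: sort_sorted => x y; exact: le_total.
- exact: cut_seq_sorted.
- by rewrite perm_sort /cut_seq perm_cons perm_sym perm_rcons perm_refl.
Qed.

Lemma piece_approx (i : 'I_n) : `|total * piece s i - (a i)%:R| <= tol.
Proof.
have T0 := total_gt0.
have ai : (a i)%:R = total * (node i.+1 - node i).
  by rewrite /node cumS natrD mulrDl addrC addKr mulrCA divff ?mulr1 // gt_eqF.
rewrite /piece cut_pointsE ai -total_rad -mulrBr normrM gtr0_norm // ler_pM2l //.
have := cut_seq_near_node (ltn_ord i); have := cut_seq_near_node (ltnW (ltn_ord i)).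
move: ((cut_seq s)`_i.+1) ((cut_seq s)`_i) => x y.
by rewrite !ler_norml => /andP[? ?] /andP[? ?]; apply/andP; split; lra.
Qed.

Lemma num_polygons_in_box k :
  (forall (S : {set 'I_n}) i, #|S| = k -> i \in S -> a i != \sum_(l in S :\ i) a l)%N ->
  num_polygons n k s = #|[set S : {set 'I_n} | (#|S| == k) && nat_polygon a S]|.
Proof.
move=> no_tie; apply: eq_card => S; rewrite !inE; case: eqP => //= /eqP Sk.
apply: eq_forallb => i; case: (boolP (i \in S)) => //= iS.
rewrite big_setD1_cond; apply: lt_sum_approx total_gt0 tol_small piece_approx _.
by apply: no_tie => //; apply/eqP.
Qed.

End InBox.

End Sampling.

Unset Implicit Arguments.

Theorem mainTheorem8 (R : realType) (k n m : nat) :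
  (3 <= k)%N -> (k <= n)%N -> (m <= 'C(n, k))%N ->
  (0 < prob_exactly R n k m)%E.
Proof.
move=> k_ge3 kn mC.
have n_gt0 : (0 < n)%N by lia.
have [a [a_gt0 no_tie num_a]] := exists_weights_num_polygons k_ge3 kn mC.
apply: (@cube_int_gt0 _ _ _ (@box_lo R n a) (@box_hi R n a)) => [t|s|s size_s s_box].
- exact: box_bounds.
- by case: ifP.
- by rewrite (num_polygons_in_box a_gt0 n_gt0 size_s s_box no_tie) num_a eqxx.
Qed.
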